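(* Let $R$ be a $\Bbbk$-algebra, $\hbar\in Z(R)$ a regular central element, $R_0=R/\hbar R$ with projection $\theta:R\to R_0$, $R_0$ module-finite over $Z(R_0)$, and $\iota:R_0\to R$ a linear section of $\theta$ such that $[\iota(z),r]\in\hbar^NR$ for all $z\in Z(R_0)$, $r\in R$ and some positive integer $N$. Let $\partial_z(w)=\theta([\iota(z),\widetilde w]/\hbar^N)$ ($\widetilde w\in\theta^{-1}(w)$) and $\{z,z'\}=\partial_z(z')$ the resulting Poisson bracket on $Z(R_0)$. (1) If $C\subseteq Z(R_0)$ is a Poisson subalgebra for this bracket and $R_0$ is module-finite over $C$, then $R_0$ is a Poisson $C$-order via the restriction of $\partial$ to $C$. (2) If moreover the restriction $\iota|_C:C\to R$ is an algebra homomorphism, then $\partial_{zz'}(w)=z\,\partial_{z'}(w)+z'\,\partial_z(w)$ for all $z,z'\in C$, $w\in R_0$.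
   Context: $\Bbbk$ is a field, $[r,r']=rr'-r'r$. A Poisson $C$-order is an algebra $A$ module-finite over a central subalgebra $C$ with a linear map $\partial:C\to\mathrm{Der}(A/C)$ (derivations of $A$ preserving $C$) such that $\{z,z'\}=\partial_z(z')$ makes $C$ a Poisson algebra. The map $\partial$ above is well defined and makes $R_0$ a Poisson $Z(R_0)$-order. *)

From HB Require Import structures.
From mathcomp Require Import all_boot all_order all_algebra.
Set Implicit Arguments. Unset Strict Implicit. Unset Printing Implicit Defensive.
Import GRing.Theory.
Local Open Scope ring_scope.

Definition commr {R : pzRingType} (x y : R) : R := x * y - y * x.

Definition in_center {R : pzRingType} (z : R) : Prop := forall a : R, z * a = a * z.

Definition is_subalgebra {k : fieldType} {A : algType k} (C : A -> Prop) : Prop :=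
  [/\ C 0, C 1, (forall x y, C x -> C y -> C (x + y)),
      (forall (a : k) x, C x -> C (a *: x)) &
      (forall x y, C x -> C y -> C (x * y))].

Definition module_finite {A : pzRingType} (C : A -> Prop) : Prop :=
  exists s : seq A, forall a : A, exists c : 'I_(size s) -> A,
    (forall i, C (c i)) /\ a = \sum_(i < size s) c i * s`_i.

Definition is_derivation {k : fieldType} {A : algType k} (D : A -> A) : Prop :=
  (forall (a : k) x y, D (a *: x + y) = a *: D x + D y) /\
  (forall x y, D (x * y) = D x * y + x * D y).

(* Poisson C-order: A is module-finite over a central subalgebra C, and
   D : C -> Der(A/C) (derivations of A preserving C) is k-linear, such that
   {z, z'} := D z z' makes C a Poisson algebra. *)
Definition poisson_order {k : fieldType} {A : algType k} (C : A -> Prop)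
    (D : A -> A -> A) : Prop :=
  [/\ is_subalgebra C /\ (forall z, C z -> in_center z),
      module_finite C,
      (forall z, C z -> is_derivation (D z) /\ (forall c, C c -> C (D z c))),
      (forall (a : k) z z', C z -> C z' ->
          forall w, D (a *: z + z') w = a *: D z w + D z' w) &
      [/\ (forall z, C z -> D z z = 0),
          (forall x y z, C x -> C y -> C z ->
             D x (D y z) + D y (D z x) + D z (D x y) = 0) &
          (forall x y z, C x -> C y -> C z ->
             D x (y * z) = D x y * z + y * D x z)]].

(* Since [iota z, -] is a derivation of R, linear in iota z, satisfying the
   Jacobi identity, each of these properties descends to partial once the
   powers of hbar are cancelled, which is possible because hbar is central
   and regular.  The Leibniz rule in z needs iota to be multiplicative on C,
   which turns [iota (z z'), r] into iota z [iota z', r] + [iota z, r] iota z'. *)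
From HB Require Import structures.
From mathcomp Require Import all_boot all_order all_algebra.
Set Implicit Arguments. Unset Strict Implicit. Unset Printing Implicit Defensive.
Import GRing.Theory.
Local Open Scope ring_scope.

Section Commutator.
Variables (k : fieldType) (A : algType k).
Implicit Types (x y z r s : A).

Lemma commrDZr (a : k) x r s : commr x (a *: r + s) = a *: commr x r + commr x s.
Proof. by rewrite /commr mulrDr mulrDl -scalerAr -scalerAl scalerBr opprD addrACA. Qed.

Lemma commrDZl (a : k) x y r : commr (a *: x + y) r = a *: commr x r + commr y r.
Proof. by rewrite /commr mulrDl mulrDr -scalerAl -scalerAr scalerBr opprD addrACA. Qed.

Lemma commrMr x r s : commr x (r * s) = commr x r * s + r * commr x s.
Proof. by rewrite /commr mulrBr mulrBl !mulrA addrA subrK. Qed.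

Lemma commrMl x y r : commr (x * y) r = x * commr y r + commr x r * y.
Proof. by rewrite /commr mulrBr mulrBl !mulrA addrA subrK. Qed.

Lemma commr_centralMr c x s : in_center c -> commr x (c * s) = c * commr x s.
Proof. by move=> cC; rewrite /commr mulrBr !mulrA (cC x). Qed.

Lemma commr_jacobi x y z :
  commr x (commr y z) + commr y (commr z x) + commr z (commr x y) = 0.
Proof.
have cancel6 (a b c d e f : A) :
    (a - b - (c - d)) + (c - e - (f - b)) + (f - d - (a - e)) = 0.
  rewrite !opprB !addrA [a - b + d - c + c]subrK [a - b + d - e + b - f + f]subrK.
  rewrite (addrAC _ (-b)) (addrAC _ (-b)) subrK.
  by rewrite (addrAC _ (-e)) addrK subrK subrr.
by rewrite /commr !(mulrBr, mulrBl) !mulrA cancel6.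
Qed.

Lemma in_centerDZ (a : k) x y :
  in_center x -> in_center y -> in_center (a *: x + y).
Proof. by move=> xC yC r; rewrite mulrDl mulrDr -scalerAl -scalerAr xC yC. Qed.

Lemma in_centerM x y : in_center x -> in_center y -> in_center (x * y).
Proof. by move=> xC yC r; rewrite -mulrA yC mulrA xC mulrA. Qed.

Lemma in_centerX x n : in_center x -> in_center (x ^+ n).
Proof. by move=> xC r; apply/commr_sym/commrX/commr_sym. Qed.

End Commutator.

Section QuantizationBracket.
Variables (k : fieldType) (R R0 : algType k) (hbar : R).
Variables (theta : {lrmorphism R -> R0}) (iota : {linear R0 -> R}) (N : nat).
Variable partial : R0 -> R0 -> R0.

Hypothesis hbar_central : in_center hbar.
Hypothesis hbar_regular : forall r : R, hbar * r = 0 -> r = 0.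
Hypothesis theta_surj : forall w : R0, exists r : R, theta r = w.
Hypothesis iotaK : forall w : R0, theta (iota w) = w.
Hypothesis commr_iota_divisible : forall (z : R0) (r : R), in_center z ->
  exists s : R, commr (iota z) r = hbar ^+ N * s.
Hypothesis partialE : forall (z w : R0) (r s : R), in_center z -> theta r = w ->
  commr (iota z) r = hbar ^+ N * s -> partial z w = theta s.

Let hbarN_central : in_center (hbar ^+ N) := in_centerX N hbar_central.

Lemma partial_theta z r s : in_center z ->
  commr (iota z) r = hbar ^+ N * s -> partial z (theta r) = theta s.
Proof. by move=> zC; apply: partialE. Qed.

Lemma partial_lift z r : in_center z ->
  exists2 s, commr (iota z) r = hbar ^+ N * s & partial z (theta r) = theta s.
Proof.
move=> zC; have [s rs] := commr_iota_divisible r zC.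
by exists s => //; apply: partial_theta.
Qed.

Lemma partial_derivation z : in_center z -> is_derivation (partial z).
Proof.
move=> zC; split=> [a w w' | w w'].
  have [[r <-] [r' <-]] := (theta_surj w, theta_surj w').
  have [[s rs ->] [s' rs' ->]] := (partial_lift r zC, partial_lift r' zC).
  rewrite -linearP -linearP (partial_theta (s := a *: s + s')) //.
  by rewrite commrDZr rs rs' mulrDr scalerAr.
have [[r <-] [r' <-]] := (theta_surj w, theta_surj w').
have [[s rs ->] [s' rs' ->]] := (partial_lift r zC, partial_lift r' zC).
rewrite -!rmorphM -rmorphD (partial_theta (s := s * r' + r * s')) //.
by rewrite commrMr rs rs' mulrDr !mulrA (hbarN_central r).
Qed.

Lemma partial_linear (a : k) z z' w : in_center z -> in_center z' ->
  partial (a *: z + z') w = a *: partial z w + partial z' w.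
Proof.
move=> zC z'C; have [r <-] := theta_surj w.
have [[s rs ->] [s' rs' ->]] := (partial_lift r zC, partial_lift r z'C).
rewrite -linearP (partial_theta (s := a *: s + s')) //; first exact: in_centerDZ.
by rewrite linearP commrDZl rs rs' mulrDr scalerAr.
Qed.

Lemma partial_self z : in_center z -> partial z z = 0.
Proof.
move=> zC; rewrite -{2}[z]iotaK (partial_theta (s := 0)) ?raddf0 //.
by rewrite /commr subrr mulr0.
Qed.

Lemma partial_jacobi x y z : in_center x -> in_center y -> in_center z ->
  partial x (partial y z) + partial y (partial z x) + partial z (partial x y) = 0.
Proof.
move=> xC yC zC.
have [syz Hyz Pyz] := partial_lift (iota z) yC.
have [szx Hzx Pzx] := partial_lift (iota x) zC.
have [sxy Hxy Pxy] := partial_lift (iota y) xC.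
rewrite !iotaK in Pyz Pzx Pxy; rewrite Pyz Pzx Pxy.
have [t1 H1 ->] := partial_lift syz xC.
have [t2 H2 ->] := partial_lift szx yC.
have [t3 H3 ->] := partial_lift sxy zC.
suff t0 : t1 + t2 + t3 = 0 by rewrite -!rmorphD t0 rmorph0.
have hbarN_lreg : GRing.lreg (hbar ^+ N) := lregX (mulrI0_lreg hbar_regular).
(* [iota x, [iota y, iota z]] = hbar^N [iota x, syz] = hbar^(2N) t1, and cyclically. *)
apply/hbarN_lreg/hbarN_lreg; rewrite !mulr0 !mulrDr -H1 -H2 -H3.
by rewrite -!commr_centralMr // -Hyz -Hzx -Hxy commr_jacobi.
Qed.

Lemma partialM z z' w : in_center z -> in_center z' ->
  iota (z * z') = iota z * iota z' ->
  partial (z * z') w = z * partial z' w + z' * partial z w.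
Proof.
move=> zC z'C iotaM; have [r <-] := theta_surj w.
have [[s rs ->] [s' rs' ->]] := (partial_lift r zC, partial_lift r z'C).
have -> : z * theta s' + z' * theta s = theta (iota z * s' + s * iota z').
  by rewrite rmorphD !rmorphM [z' * _]z'C; congr (_ * _ + _ * _); exact/esym/iotaK.
rewrite (partial_theta (s := iota z * s' + s * iota z')) //; first exact: in_centerM.
by rewrite iotaM commrMl rs rs' mulrDr !mulrA (hbarN_central (iota z)).
Qed.

End QuantizationBracket.

Theorem corollary2p5 (k : fieldType) (R R0 : algType k) (hbar : R)
  (theta : {lrmorphism R -> R0}) (iota : {linear R0 -> R}) (N : nat)
  (partial : R0 -> R0 -> R0) (C : R0 -> Prop) :
  (* hbar is a regular central element *)
  in_center hbar -> (forall r : R, hbar * r = 0 -> r = 0) ->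
  (* R0 = R / hbar R with projection theta *)
  (forall w : R0, exists r : R, theta r = w) ->
  (forall r : R, theta r = 0 <-> exists s : R, r = hbar * s) ->
  (* R0 module-finite over Z(R0) *)
  module_finite (@in_center R0) ->
  (* iota is a linear section of theta *)
  (forall w : R0, theta (iota w) = w) ->
  (0 < N)%N ->
  (forall (z : R0) (r : R), in_center z ->
     exists s : R, commr (iota z) r = hbar ^+ N * s) ->
  (* partial_z(w) = theta([iota z, w~] / hbar^N) *)
  (forall (z w : R0) (r s : R), in_center z -> theta r = w ->
     commr (iota z) r = hbar ^+ N * s -> partial z w = theta s) ->
  (* C is a Poisson subalgebra of Z(R0), R0 module-finite over C *)
  is_subalgebra C -> (forall z, C z -> in_center z) ->
  (forall z z', C z -> C z' -> C (partial z z')) ->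
  module_finite C ->
  poisson_order C partial /\
  ((forall z z', C z -> C z' -> iota (z * z') = iota z * iota z') ->
   iota 1 = 1 ->
   forall (z z' w : R0), C z -> C z' ->
     partial (z * z') w = z * partial z' w + z' * partial z w).
Proof.
move=> hC hreg surj _ _ iotaK _ divisible pE subC CC Cpartial mfC.
have der z (Cz : C z) : is_derivation (partial z) :=
  partial_derivation hC surj divisible pE (CC z Cz).
split; last first.
  move=> iotaM _ z z' w Cz Cz'.
  exact (partialM hC surj iotaK divisible pE w (CC z Cz) (CC z' Cz') (iotaM z z' Cz Cz')).
split=> //.
- by move=> z Cz; split=> [|c Cc]; [apply: der | apply: Cpartial].
- move=> a z z' Cz Cz' w.
  exact (partial_linear surj divisible pE a w (CC z Cz) (CC z' Cz')).
split=> [z Cz | x y z Cx Cy Cz | x y z Cx Cy Cz].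
- exact (partial_self iotaK pE (CC z Cz)).
- exact (partial_jacobi hC hreg iotaK divisible pE (CC x Cx) (CC y Cy) (CC z Cz)).
- exact: (der x Cx).2.
Qed.
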